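(* Fix integers $2\le a<b$ with $a\nmid b$, a positive integer $d$, and a positive integer $k$. Assume $f^{(b)}_{b+1},\dots,f^{(b)}_{b+a-1}$ satisfy condition (T) at $\tilde{\mathbf c}\in\mathbb C^{a-1}$. Fix $\mathbf c(-\infty)\in(\mathbb C[[t]])^{a-1}$ with $c_i(-\infty)\equiv t^{di}\tilde c_i\bmod t^{di+1}$, and series $o_{b+j}(\mathbf c)$ ($j=1,\dots,a-1$) of the type described in the context. Suppose the system $\bar f^{(b)}_{b+j}(\mathbf c)=t^{d(b+j)}f^{(b)}_{b+j}(\tilde{\mathbf c})+o_{b+j}(\mathbf c)\pmod{t^{d(b+j)+k}}$, $j=1,\dots,a-1$, has a solution $\mathbf c(k-1)\in(\mathbb C[[t]])^{a-1}$ with $c_i(k-1)\equiv t^{di}\tilde c_i\bmod t^{di+1}$. Then the same system with $k$ replaced by $k+1$ has a solution $\mathbf c(k)$ with $c_i(k)\equiv c_i(k-1)\bmod t^{di+k}$ for all $i$.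
   Context: Polynomials $f^{(b)}_i(\mathbf c)$, $\mathbf c=(c_2,\dots,c_a)$, are defined by $(1+\sum_{k=2}^ac_kx^k)^{b/a}=1+\sum_{i\ge1}f^{(b)}_i(\mathbf c)x^i$. Condition (T) at $\tilde{\mathbf c}$ (for $a>2$): the Jacobian determinant at $\tilde{\mathbf c}$ of $(\bar f^{(b)}_{b+1},\dots,\bar f^{(b)}_{b+a-1})$ with $\bar f$ formed using constants $\tilde{\mathbf c}$ (formula below with $c_k(-\infty)$ replaced by $\tilde c_k$) is nonzero; for $a=2$, (T) holds at any $\tilde c\ne0$. In the system, $\bar f^{(b)}_{b+j}(\mathbf c)=f^{(b)}_{b+j}(\mathbf c)+\sum_{k=2}^{j-1}\frac{(j-k)(c_k-c_k(-\infty))}{a}f^{(b)}_{b+j-k}(\mathbf c(-\infty))-\sum_{k=2}^{j-1}\frac{j-k}{a}\sum_{l=2}^{k-2}\frac{a-l}{a}(c_{k-l}-c_{k-l}(-\infty))c_l(-\infty)f^{(b)}_{b+j-k}(\mathbf c(-\infty))$. Each $o_{b+j}(\mathbf c)\in\mathbb C[c_2,\dots,c_a][[t]]$ is a fixed ($t$-adically convergent) sum of terms of the forms (1) $\alpha t^mc_2^{l_2}\cdots c_a^{l_a}$ with $m+d\sum_pp\,l_p\ge d(b+j)+1$, or (2) $\alpha t^mc_2^{l_2}\cdots c_a^{l_a}(c_k-c_k(-\infty))(c_{k'}-c_{k'}(-\infty))$ with $m+d\sum_pp\,l_p\ge d(b+j)-d(k+k')$, where $\alpha\in\mathbb C$ and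 $m,l_p\ge0$; the unknowns $\mathbf c$ are substituted into these series. *)

From HB Require Import structures.
From mathcomp Require Import all_boot all_order all_algebra.
From mathcomp Require Import mpoly.
From mathcomp Require Import complex.
Set Implicit Arguments. Unset Strict Implicit. Unset Printing Implicit Defensive.
Import Order.TTheory GRing.Theory Num.Theory.
Local Open Scope ring_scope.

Section Defs.
Variable C : fieldType.

Definition gbin (a b n : nat) : C :=
  (\prod_(j < n) ((b%:R / a%:R) - j%:R)) / (n`!)%:R.

(** f^{(b)}_i(c), evaluated at c = (c_2,...,c_a) in any C-algebra A (only the
    indices 2..a of c : nat -> A are used):  the coefficient of x^i in
    (1 + u)^{b/a} = \sum_n binom(b/a,n) u^n,   u = \sum_{k=2}^a c_k x^k.
    Since u has x-order >= 2, only n <= i contribute. *)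
Definition fb (A : lalgType C) (a b i : nat) (c : nat -> A) : A :=
  \sum_(n < i.+1)
     gbin a b n *: (((\sum_(2 <= k < a.+1) (c k)%:P * 'X^k) ^+ n)`_i).

(** \bar f^{(b)}_{b+j}(c), formed with the "constants" c0 (= c(-oo) or ~c). *)
Definition fbar (A : lalgType C) (a b j : nat) (c c0 : nat -> A) : A :=
  fb a b (b + j)%N c
  + \sum_(2 <= k < j) (((j - k)%N%:R / a%:R) *: ((c k - c0 k) * fb a b (b + j - k)%N c0))
  - \sum_(2 <= k < j) (((j - k)%N%:R / a%:R) *:
        \sum_(2 <= l < k.-1) (((a - l)%N%:R / a%:R) *:
            ((c (k - l)%N - c0 (k - l)%N) * c0 l * fb a b (b + j - k)%N c0))).

Definition fbC (a b i : nat) (ct : nat -> C) : C := @fb C^o a b i ct.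

(** The polynomials are
    multivariate polynomials in variables 'X_0..'X_a, 'X_k standing for c_k. *)
Definition mvar (a : nat) : nat -> {mpoly C[a.+1]} := fun k => 'X_(inord k).

Definition condT (a b : nat) (ct : nat -> C) : Prop :=
  if a == 2%N then ct 2%N != 0 else
  \det (\matrix_(r < a.-1, s < a.-1)
          (mderiv (inord (s + 2)%N) (fbar a b r.+1 (mvar a) (fun k => (ct k)%:MP))).@[
             fun v : 'I_a.+1 => ct v]) != 0.

(** Formal power series in t over C: coefficient sequences. *)
Definition ps := nat -> C.

Definition ps_trunc (N : nat) (s : ps) : {poly C} := \poly_(i < N) s i.

Definition eqmodt (N : nat) (s s' : ps) : Prop := forall n, (n < N)%N -> s n = s' n.

Definition t_mono (m : nat) (x : C) : ps := fun n => if n == m then x else 0.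

(** Power series obtained by evaluating a polynomial expression E in c and
    c(-oo): its n-th coefficient is computed from the truncations mod t^{n+1}
    (C[[t]] -> C[t]/(t^{n+1}) is a ring morphism). *)
Definition ps_eval (E : (nat -> {poly C}) -> (nat -> {poly C}) -> {poly C})
  (c c0 : nat -> ps) : ps :=
  fun n => (E (fun i => ps_trunc n.+1 (c i)) (fun i => ps_trunc n.+1 (c0 i)))`_n.

(** A term of o_{b+j}:  kind (1) (ot_kind2 = false):  alpha t^m c_2^{l_2}...c_a^{l_a};
    kind (2) (ot_kind2 = true): alpha t^m c^l (c_k - c_k(-oo)) (c_k' - c_k'(-oo)).
    The exponent m of t is not stored: it is the index under which the term
    is filed (see below). *)
Record oterm := OTerm {
  ot_kind2 : bool; ot_alpha : C; ot_l : nat -> nat; ot_k : nat; ot_k' : nat }.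

Definition oterm_ok (a b d j m : nat) (T : oterm) : Prop :=
  let w := (\sum_(2 <= p < a.+1) p * ot_l T p)%N in
  if ot_kind2 T then
    [/\ (2 <= ot_k T <= a)%N, (2 <= ot_k' T <= a)%N &
        (d * (b + j)%N <= m + d * w + d * (ot_k T + ot_k' T))%N]
  else (d * (b + j)%N + 1 <= m + d * w)%N.

Definition oterm_val (a m : nat) (T : oterm) (c c0 : nat -> {poly C}) : {poly C} :=
  ot_alpha T *: ('X^m * (\prod_(2 <= p < a.+1) c p ^+ ot_l T p)
     * (if ot_kind2 T then (c (ot_k T) - c0 (ot_k T)) * (c (ot_k' T) - c0 (ot_k' T))
        else 1)).

(** o_{b+j} is the t-adically convergent sum of the terms
    oterms j m q (q < ocnt j m), the term oterms j m q carrying t^m.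
    (Any t-adically convergent sum of such terms can be regrouped this way:
    only finitely many terms have a given power t^m.) *)
Definition oval (a : nat) (ocnt : nat -> nat -> nat)
  (oterms : nat -> nat -> nat -> oterm) (j : nat) (c c0 : nat -> ps) : ps :=
  fun n => (\sum_(m < n.+1) \sum_(q < ocnt j m)
     oterm_val a m (oterms j m q) (fun i => ps_trunc n.+1 (c i))
                                  (fun i => ps_trunc n.+1 (c0 i)))`_n.

Definition oterms_ok (a b d : nat) (ocnt : nat -> nat -> nat)
  (oterms : nat -> nat -> nat -> oterm) : Prop :=
  forall j m q, (1 <= j <= a.-1)%N -> (q < ocnt j m)%N -> oterm_ok a b d j m (oterms j m q).

Definition solves (a b d K : nat) (ct : nat -> C) (cinf : nat -> ps)
  (ocnt : nat -> nat -> nat) (oterms : nat -> nat -> nat -> oterm)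
  (c : nat -> ps) : Prop :=
  forall j, (1 <= j <= a.-1)%N ->
    eqmodt (d * (b + j)%N + K)
      (ps_eval (fun cc cc0 => fbar a b j cc cc0) c cinf)
      (fun n => t_mono (d * (b + j)%N) (fbC a b (b + j)%N ct) n
                + oval a ocnt oterms j c cinf n).

End Defs.

From HB Require Import structures.
From mathcomp Require Import all_boot all_order all_algebra.
From mathcomp Require Import mpoly.
From mathcomp Require Import complex.
From mathcomp Require Import ring zify.
From Stdlib Require Import FunctionalExtensionality.
Set Implicit Arguments. Unset Strict Implicit. Unset Printing Implicit Defensive.
Import Order.TTheory GRing.Theory Num.Theory.
Local Open Scope ring_scope.

(* Substituting c_i = t^{di} u_i, weighted homogeneity (c_i of weight i)
   factors t^{d(b+j)} out of f_{b+j} and \bar f_{b+j}.  Hence perturbing c_i by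
   E_i t^{di+k} leaves \bar f_{b+j}(c) unchanged modulo t^{d(b+j)+k}, and, by a
   first-order Taylor expansion at ~c, moves its coefficient of t^{d(b+j)+k} by (J E)_j,
   J being the Jacobian matrix of condition (T); the terms of \bar f linear in
   c - c(-oo) contribute nothing there since c = c(-oo) mod t^{di+1}.  The weight
   bounds on the terms of o_{b+j} make o_{b+j}(c) unchanged modulo t^{d(b+j)+k+1}.
   Condition (T) makes J invertible (for a = 2, J = ((b+1)/2) binom(b/2, (b+1)/2)
   ~c_2^{(b-1)/2} with b odd since a does not divide b), so E := J^{-1} applied to
   the residuals of order d(b+j)+k gives the solution modulo one more power of t. *)

Section XDivisibility.
Variable K : comNzRingType.
Implicit Types (p q f g : {poly K}).

(* [Xdvd L p] unfolds to a product, so [apply:] with a lemma concluding in [Xdvd]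
   needs its trailing arguments given explicitly, e.g. [apply: Xdvd_leq h _]. *)
Definition Xdvd (L : nat) p := forall i, (i < L)%N -> p`_i = 0.

Lemma Xdvd0 L : Xdvd L (0 : {poly K}).
Proof. by move=> i _; rewrite coef0. Qed.

Lemma XdvdD L p q : Xdvd L p -> Xdvd L q -> Xdvd L (p + q).
Proof. by move=> hp hq i hi; rewrite coefD hp // hq // addr0. Qed.

Lemma XdvdN L p : Xdvd L p -> Xdvd L (- p).
Proof. by move=> hp i hi; rewrite coefN hp // oppr0. Qed.

Lemma XdvdB L p q : Xdvd L p -> Xdvd L q -> Xdvd L (p - q).
Proof. by move=> hp hq; apply: XdvdD => //; apply: XdvdN. Qed.

Lemma XdvdZ L c p : Xdvd L p -> Xdvd L (c *: p).
Proof. by move=> hp i hi; rewrite coefZ hp // mulr0. Qed.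

Lemma Xdvd_leq L L' p : Xdvd L p -> (L' <= L)%N -> Xdvd L' p.
Proof. by move=> hp hL i hi; apply: hp; apply: leq_trans hL. Qed.

Lemma XdvdM L1 L2 p q : Xdvd L1 p -> Xdvd L2 q -> Xdvd (L1 + L2) (p * q).
Proof.
move=> hp hq i hi; rewrite coefM big1 // => [[j /=]]; rewrite ltnS => hj _.
case: (ltnP j L1) => h1; first by rewrite hp // mul0r.
by rewrite hq ?mulr0 //; lia.
Qed.

Lemma XdvdMl L p q : Xdvd L q -> Xdvd L (p * q).
Proof. by rewrite -{2}[L]add0n; apply: XdvdM. Qed.

Lemma XdvdMr L p q : Xdvd L p -> Xdvd L (p * q).
Proof. by rewrite -{2}[L]addn0 => hp; apply: XdvdM. Qed.

Lemma XdvdBB L p q f g : Xdvd L (p - f) -> Xdvd L (q - g) -> Xdvd L (p - q - (f - g)).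
Proof.
move=> h1 h2; rewrite (_ : _ - _ = (p - f) - (q - g)); last by ring.
exact: XdvdB.
Qed.

Lemma Xdvd_mulB L p q f g : Xdvd L (p - f) -> Xdvd L (q - g) -> Xdvd L (p * q - f * g).
Proof.
move=> h1 h2; rewrite (_ : _ - _ = (p - f) * q + f * (q - g)); last by ring.
by apply: XdvdD; [apply: XdvdMr | apply: XdvdMl].
Qed.

Lemma Xdvd_sum L (I : Type) (r : seq I) (P : pred I) (F : I -> {poly K}) :
  (forall i, P i -> Xdvd L (F i)) -> Xdvd L (\sum_(i <- r | P i) F i).
Proof. by move=> h; elim/big_ind: _ => //; [apply: Xdvd0 | apply: XdvdD]. Qed.

Lemma Xdvd_sum_nat L m n (F : nat -> {poly K}) :
  (forall i, (m <= i < n)%N -> Xdvd L (F i)) -> Xdvd L (\sum_(m <= i < n) F i).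
Proof. by move=> h; rewrite big_nat_cond; apply: Xdvd_sum => i /andP [hi _]; apply: h. Qed.

Lemma XdvdXn_leq L L' : (L' <= L)%N -> Xdvd L' 'X^L.
Proof. by move=> hL i hi; rewrite coefXn (ltn_eqF (leq_trans hi hL)). Qed.

Lemma XdvdXn L : Xdvd L 'X^L.
Proof. exact: XdvdXn_leq. Qed.

Lemma Xdvd_dropE L p : Xdvd L p -> p = 'X^L * drop_poly L p.
Proof.
move=> h; apply/polyP => m; rewrite coefXnM coef_drop_poly.
by case: ltnP => hm; [rewrite h | rewrite subnK].
Qed.

Lemma coefM_Xdvd L p q : Xdvd L q -> (p * q)`_L = p`_0 * q`_L.
Proof.
move=> hq; rewrite coefM big_ord_recl subn0 /= big1 ?addr0 // => [[j hj]] _ /=.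
by rewrite hq ?mulr0 // /bump /=; lia.
Qed.

Lemma XdvdMB w1 w2 e f1 g1 f2 g2 :
  Xdvd w1 g1 -> Xdvd (w1 + e) (f1 - g1) -> Xdvd w2 g2 -> Xdvd (w2 + e) (f2 - g2) ->
  Xdvd (w1 + w2 + e) (f1 * f2 - g1 * g2).
Proof.
move=> h1 h2 h3 h4.
have hf2 : Xdvd w2 f2.
  rewrite -[f2](subrK g2); apply: XdvdD h3; exact: Xdvd_leq h4 (leq_addr _ _).
rewrite (_ : _ - _ = (f1 - g1) * f2 + g1 * (f2 - g2)); last by ring.
by apply: XdvdD; [apply: Xdvd_leq (XdvdM h2 hf2) _ | apply: Xdvd_leq (XdvdM h1 h4) _]; lia.
Qed.

Lemma XdvdXB w e f g : Xdvd w g -> Xdvd (w + e) (f - g) ->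
  forall m, Xdvd (w * m) (g ^+ m) /\ Xdvd (w * m + e) (f ^+ m - g ^+ m).
Proof.
move=> hg hfg; elim=> [|m [ihg ihfg]].
  by rewrite !expr0 subrr muln0; split; [|apply: Xdvd0].
by rewrite !exprS mulnS; split; [apply: XdvdM | apply: XdvdMB].
Qed.

Lemma Xdvd_prodB (r : seq nat) (f g : nat -> {poly K}) (wt : nat -> nat) e :
  (forall i, i \in r -> Xdvd (wt i) (g i) /\ Xdvd (wt i + e) (f i - g i)) ->
  Xdvd (\sum_(i <- r) wt i) (\prod_(i <- r) g i) /\
  Xdvd (\sum_(i <- r) wt i + e) (\prod_(i <- r) f i - \prod_(i <- r) g i).
Proof.
elim: r => [|x r ih] h; first by rewrite !big_nil subrr; split; [|apply: Xdvd0].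
have [hx1 hx2] := h x (mem_head _ _).
have [ih1 ih2] := ih (fun i hi => h i (@mem_behead _ (x :: r) i hi)).
by rewrite !big_cons; split; [apply: XdvdM | apply: XdvdMB].
Qed.

Lemma coef_expr_rescale (s : K) p q : (forall j, q`_j = s ^+ j * p`_j) ->
  forall n i, (q ^+ n)`_i = s ^+ i * (p ^+ n)`_i.
Proof.
move=> hq; elim=> [|n ih] i.
  by rewrite !expr0 coef1; case: i => [|i] /=; rewrite ?expr0 ?mul1r ?mulr0.
rewrite !exprS !coefM mulr_sumr; apply: eq_bigr => [[j hj]] _ /=.
by rewrite hq ih mulrACA -exprD subnKC.
Qed.

End XDivisibility.

Arguments Xdvd0 {K}.
Arguments XdvdXn {K}.
Arguments XdvdXn_leq {K}.

Lemma mderivX_id (K : nzRingType) n (i : 'I_n) : mderiv i ('X_i : {mpoly K[n]}) = 1.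
Proof.
rewrite mderivX mnm1E eqxx.
have -> : (U_(i) - U_(i) = 0)%MM by apply/mnmP => v; rewrite mnmBE mnm0E subnn.
by rewrite mpolyX0 scale1r.
Qed.

Section FirstOrderTaylor.
Variables (K : comNzRingType) (n k : nat) (X H : 'I_n -> {poly K}).
Hypothesis k_gt0 : (0 < k)%N.
Hypothesis XdvdH : forall v, Xdvd k (H v).

Local Notation ev := (mmap (@polyC K) X).
Local Notation evH := (mmap (@polyC K) (fun v => X v + H v)).

(* The first conjunct is what makes the invariant stable under products. *)
Let taylor1 P := Xdvd k (evH P - ev P) /\
  Xdvd k.+1 (evH P - ev P - \sum_v ev (P^`M(v)) * H v).

Let taylor1D P Q : taylor1 P -> taylor1 Q -> taylor1 (P + Q).
Proof.
move=> [h1 h2] [h3 h4]; rewrite /taylor1 !rmorphD /=; split.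
  by rewrite opprD addrACA; apply: XdvdD.
rewrite (_ : \sum_v _ = \sum_v ev (P^`M(v)) * H v + \sum_v ev (Q^`M(v)) * H v); last first.
  by rewrite -big_split; apply: eq_bigr => v _; rewrite mderivD rmorphD mulrDl.
set T1 := \sum_v _; set T2 := \sum_v _.
rewrite (_ : _ - _ = (evH P - ev P - T1) + (evH Q - ev Q - T2)); last by ring.
exact: XdvdD.
Qed.

Let taylor1Z c P : taylor1 P -> taylor1 (c *: P).
Proof.
move=> [h1 h2]; rewrite /taylor1 !mmapZ; split; first by rewrite -mulrBr; apply: XdvdMl.
rewrite (_ : \sum_v _ = c%:P * \sum_v ev (P^`M(v)) * H v).
  by rewrite -!mulrBr; apply: XdvdMl.
by rewrite mulr_sumr; apply: eq_bigr => v _; rewrite mderivZ mmapZ mulrA.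
Qed.

Let taylor1M P Q : taylor1 P -> taylor1 Q -> taylor1 (P * Q).
Proof.
move=> [h1 h2] [h3 h4]; rewrite /taylor1 !rmorphM /=; split.
  rewrite (_ : _ - _ = (evH P - ev P) * evH Q + ev P * (evH Q - ev Q)); last by ring.
  by apply: XdvdD; [apply: XdvdMr | apply: XdvdMl].
set T1 := \sum_v ev (P^`M(v)) * H v; set T2 := \sum_v ev (Q^`M(v)) * H v.
have -> : \sum_v ev ((P * Q)^`M(v)) * H v = T1 * ev Q + ev P * T2.
  rewrite /T1 /T2 mulr_suml mulr_sumr -big_split /=; apply: eq_bigr => v _.
  by rewrite mderivM rmorphD /= !rmorphM; ring.
have hT1 : Xdvd k T1 by apply: Xdvd_sum => v _; apply: XdvdMl.
rewrite (_ : _ - _ = (evH P - ev P - T1) * evH Q + T1 * (evH Q - ev Q)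
     + ev P * (evH Q - ev Q - T2)); last by ring.
apply: XdvdD; last exact: XdvdMl.
by apply: XdvdD; [apply: XdvdMr | apply: Xdvd_leq (XdvdM hT1 h3) _; lia].
Qed.

Let taylor1_1 : taylor1 1.
Proof.
rewrite /taylor1 !rmorph1 subrr big1 ?subr0; first by split; apply: Xdvd0.
by move=> v _; rewrite -mpolyC1 mderivC rmorph0 mul0r.
Qed.

Let taylor1X i : taylor1 'X_i.
Proof.
rewrite /taylor1 !mmapX !mmap1U addrC addKr; split => //.
rewrite (bigD1 i) //= big1 => [|v hv].
  by rewrite mderivX_id rmorph1 mul1r addr0 subrr; apply: Xdvd0.
by rewrite mderivX mnm1E eq_sym (negbTE hv) scale0r rmorph0 mul0r.
Qed.

Let taylor1_all P : taylor1 P.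
Proof.
elim/mpolyind: P => [|c m p _ _ hp].
  rewrite /taylor1 !rmorph0 subrr big1 ?subr0; first by split; apply: Xdvd0.
  by move=> v _; rewrite mderiv0 rmorph0 mul0r.
apply: taylor1D => //; apply: taylor1Z; rewrite mpolyXE_id.
elim/big_ind: _ => [||i _]; [exact: taylor1_1 | exact: taylor1M |].
elim: (m i) => [|e ih]; first by rewrite expr0; exact: taylor1_1.
by rewrite exprS; apply: taylor1M.
Qed.

Lemma Xdvd_mmap_perturb P : Xdvd k (evH P - ev P).
Proof. by have [] := taylor1_all P. Qed.

Lemma coef_mmap_perturb P :
  (evH P - ev P)`_k = \sum_v (ev (P^`M(v)))`_0 * (H v)`_k.
Proof.
have [_ /(_ k (ltnSn k))] := taylor1_all P.
rewrite coefB => /eqP; rewrite subr_eq0 => /eqP ->.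
by rewrite coef_sum; apply: eq_bigr => v _; rewrite coefM_Xdvd.
Qed.

End FirstOrderTaylor.

Lemma coef0_mmap (K : comNzRingType) n (X : 'I_n -> {poly K}) (P : {mpoly K[n]}) :
  (mmap (@polyC K) X P)`_0 = P.@[fun v => (X v)`_0].
Proof.
rewrite mevalE /mmap coef_sum; apply: eq_bigr => m _.
rewrite coefCM /mmap1; congr (_ * _).
rewrite -horner_coef0 horner_prod; apply: eq_bigr => v _ /=.
by rewrite horner_exp horner_coef0.
Qed.

Section FbarAlgebra.
Variable C : fieldType.

Lemma eq_fb (A : lalgType C) a b i (c c' : nat -> A) :
  (forall k, (2 <= k <= a)%N -> c k = c' k) -> fb a b i c = fb a b i c'.
Proof.
move=> h; rewrite /fb; apply: eq_bigr => n _; congr (_ *: nth _ (polyseq (_ ^+ _)) _).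
by apply: eq_big_nat => kk hk; rewrite h.
Qed.

Lemma fb_morph (A B : lalgType C) (f : {rmorphism A -> B})
  (fZ : forall (x : C) (y : A), f (x *: y) = x *: f y) a b i (c : nat -> A) :
  f (fb a b i c) = fb a b i (fun k => f (c k)).
Proof.
rewrite /fb rmorph_sum; apply: eq_bigr => n _; rewrite fZ -coef_map rmorphXn rmorph_sum.
congr (_ *: nth _ (polyseq (_ ^+ _)) _); apply: eq_bigr => kk _.
by rewrite rmorphM /= map_polyC map_polyXn.
Qed.

Lemma fb_weighted (A : comAlgType C) a b i (s : A) (c : nat -> A) :
  fb a b i (fun k => s ^+ k * c k) = s ^+ i * fb a b i c.
Proof.
rewrite /fb mulr_sumr; apply: eq_bigr => n _; rewrite -scalerAr; congr (_ *: _).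
apply: coef_expr_rescale => j; rewrite !coef_sum mulr_sumr; apply: eq_bigr => kk _.
by rewrite !coefCM !coefXn; case: eqP => [->|]; rewrite ?mulr1 ?mulr0.
Qed.

Definition fbar_lin (A : lalgType C) (a b j : nat) (h c0 : nat -> A) : A :=
  \sum_(2 <= k < j) (((j - k)%N%:R / a%:R) *: (h k * fb a b (b + j - k)%N c0))
  - \sum_(2 <= k < j) (((j - k)%N%:R / a%:R) *:
        \sum_(2 <= l < k.-1) (((a - l)%N%:R / a%:R) *:
            (h (k - l)%N * c0 l * fb a b (b + j - k)%N c0))).

Lemma fbarE (A : lalgType C) a b j (c c0 : nat -> A) :
  fbar a b j c c0 = fb a b (b + j) c + fbar_lin a b j (fun k => c k - c0 k) c0.
Proof. by rewrite /fbar /fbar_lin addrA. Qed.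

Lemma fbar_linD (A : lalgType C) a b j (h1 h2 c0 : nat -> A) :
  fbar_lin a b j (fun k => h1 k + h2 k) c0 = fbar_lin a b j h1 c0 + fbar_lin a b j h2 c0.
Proof.
rewrite /fbar_lin addrACA -opprD -!big_split /=; congr (_ - _).
  by apply: eq_bigr => kk _; rewrite mulrDl scalerDr.
apply: eq_bigr => kk _; rewrite -scalerDr -big_split /=; congr (_ *: _).
by apply: eq_bigr => l _; rewrite !mulrDl scalerDr.
Qed.

Lemma fbarD_sub (A : lalgType C) a b j (c h c0 : nat -> A) :
  fbar a b j (fun k => c k + h k) c0 - fbar a b j c c0 =
  fb a b (b + j) (fun k => c k + h k) - fb a b (b + j) c + fbar_lin a b j h c0.
Proof.
rewrite !fbarE (_ : (fun k => c k + h k - c0 k) = (fun k => (c k - c0 k) + h k)).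
  rewrite fbar_linD; set u := fbar_lin _ _ _ (fun k => c k - c0 k) _.
  by rewrite opprD addrACA [u + _]addrC addrK.
by apply: functional_extensionality => kk; rewrite addrAC.
Qed.

Lemma fbarD_sub_rebase (A : lalgType C) a b j (c h c0 c0' : nat -> A) :
  fbar a b j (fun k => c k + h k) c0 - fbar a b j c c0 =
  fbar a b j (fun k => c k + h k) c0' - fbar a b j c c0'
  + (fbar_lin a b j h c0 - fbar_lin a b j h c0').
Proof.
have addrBKA (x y z : A) : x + z = x + y + (z - y) by rewrite -addrA (addrC y) subrK.
apply: etrans (fbarD_sub a b j c h c0) _; apply: esym.
apply: etrans (congr1 (fun x => x + _) (fbarD_sub a b j c h c0')) _.
exact: esym (addrBKA _ _ _).
Qed.

Lemma eq_fbar (A : lalgType C) a b j (c c' c0 c0' : nat -> A) : (j <= a)%N ->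
  (forall k, (2 <= k <= a)%N -> c k = c' k /\ c0 k = c0' k) ->
  fbar a b j c c0 = fbar a b j c' c0'.
Proof.
move=> ja h.
have e1 i : fb a b i c = fb a b i c' by apply: eq_fb => kk /h [].
have e2 i : fb a b i c0 = fb a b i c0' by apply: eq_fb => kk /h [].
rewrite /fbar e1; congr (_ + _ - _).
  apply: eq_big_nat => kk hk; have [-> ->] : c kk = c' kk /\ c0 kk = c0' kk by apply: h; lia.
  by rewrite e2.
apply: eq_big_nat => kk hk; congr (_ *: _); apply: eq_big_nat => l hl.
have [-> ->] : c (kk - l)%N = c' (kk - l)%N /\ c0 (kk - l)%N = c0' (kk - l)%N by apply: h; lia.
have [_ ->] : c l = c' l /\ c0 l = c0' l by apply: h; lia.
by rewrite e2.
Qed.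

Lemma fbar_morph (A B : lalgType C) (f : {rmorphism A -> B})
  (fZ : forall (x : C) (y : A), f (x *: y) = x *: f y) a b j (c c0 : nat -> A) :
  f (fbar a b j c c0) = fbar a b j (fun k => f (c k)) (fun k => f (c0 k)).
Proof.
rewrite /fbar rmorphB rmorphD /= fb_morph //; congr (_ + _ - _).
  rewrite rmorph_sum; apply: eq_bigr => kk _.
  by rewrite fZ rmorphM rmorphB fb_morph.
rewrite rmorph_sum; apply: eq_bigr => kk _; rewrite fZ rmorph_sum; congr (_ *: _).
by apply: eq_bigr => l _; rewrite fZ !rmorphM rmorphB fb_morph.
Qed.

Lemma fbar_weighted (A : comAlgType C) a b j (s : A) (c c0 : nat -> A) :
  fbar a b j (fun k => s ^+ k * c k) (fun k => s ^+ k * c0 k) =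
  s ^+ (b + j) * fbar a b j c c0.
Proof.
rewrite /fbar fb_weighted mulrBr mulrDr; congr (_ + _ - _).
  rewrite mulr_sumr; apply: eq_big_nat => kk hk.
  rewrite fb_weighted -scalerAr -mulrBr mulrACA -exprD subnKC; last by lia.
  by rewrite mulrA.
rewrite mulr_sumr; apply: eq_big_nat => kk hk; rewrite -scalerAr mulr_sumr; congr (_ *: _).
apply: eq_big_nat => l hl; rewrite -scalerAr fb_weighted -mulrBr; congr (_ *: _).
rewrite (_ : s ^+ (b + j) = s ^+ (kk - l) * s ^+ l * s ^+ (b + j - kk)); last first.
  by rewrite -!exprD; congr (_ ^+ _); lia.
ring.
Qed.

End FbarAlgebra.

Lemma mmap_fbar_mvar (K : fieldType) a b j (ct : nat -> K) (Y : nat -> {poly K}) :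
  (j <= a)%N ->
  mmap (@polyC K) (fun v : 'I_a.+1 => if (2 <= v)%N then Y v else (ct v)%:P)
    (fbar a b j (mvar K a) (fun k => (ct k)%:MP)) = fbar a b j Y (fun k => (ct k)%:P).
Proof.
move=> ja; rewrite (fbar_morph (f := mmap (@polyC K) _ : {rmorphism _ -> {poly K}})); last first.
  by move=> x y; rewrite /= mmapZ mul_polyC.
apply: eq_fbar ja _ => i hi; rewrite /mvar /= mmapX mmap1U mmapC inordK; last by lia.
by case/andP: hi => -> _.
Qed.

Definition jac_entry (K : fieldType) (a b : nat) (ct : nat -> K) (j s : nat) : K :=
  (mderiv (inord (s + 2)) (fbar a b j (mvar K a) (fun i => (ct i)%:MP))).@[
     fun v : 'I_a.+1 => ct v].

Lemma sum_ord_from2 (K : comNzRingType) a (g : 'I_a.+1 -> K) (E : nat -> K) :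
  (2 <= a)%N ->
  \sum_(v < a.+1) g v * (if (2 <= v)%N then E v else 0) =
  \sum_(s < a.-1) g (inord (s + 2)) * E (s + 2)%N.
Proof.
move=> a_ge2; pose G v := g (inord v) * (if (2 <= v)%N then E v else 0).
rewrite (eq_bigr (G \o val)) => [|v _]; last by rewrite /G /= inord_val.
rewrite -(big_mkord xpredT G) (big_cat_nat (n := 2)) //=; last by lia.
rewrite big_nat big1 ?add0r => [|v /andP [_ v_lt2]]; last by rewrite /G leqNgt v_lt2 mulr0.
rewrite -{1}[2%N]add0n big_addn (_ : (a.+1 - 2 = a.-1)%N); last by lia.
by rewrite big_mkord; apply: eq_bigr => s _; rewrite /G leq_addl.
Qed.

Section FbarIncrement.
Variable K : fieldType.

Lemma coef0_fb a b i (P : nat -> {poly K}) :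
  (fb a b i P)`_0 = fb (A := K^o) a b i (fun v => (P v)`_0).
Proof.
have := fb_morph (f := horner_eval (0 : K) : {rmorphism {poly K} -> K^o}) _ a b i P.
rewrite /= horner_evalE horner_coef0 => ->; last by move=> x y; rewrite !horner_evalE hornerZ.
by apply: (@eq_fb K K^o) => v _ /=; rewrite horner_evalE horner_coef0.
Qed.

Lemma Xdvd1_fbB a b i (P Q : nat -> {poly K}) :
  (forall v, (2 <= v <= a)%N -> (P v)`_0 = (Q v)`_0) -> Xdvd 1 (fb a b i P - fb a b i Q).
Proof.
move=> h m; rewrite ltnS leqn0 => /eqP ->.
rewrite coefB [X in X - _]coef0_fb [X in _ - X]coef0_fb.
by apply/eqP; rewrite subr_eq0; apply/eqP/(@eq_fb K K^o) => v /h.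
Qed.

Lemma Xdvd_fbar_linB a b j (h v w : nat -> {poly K}) L M : (j <= a)%N ->
  (forall i, (2 <= i <= a)%N -> Xdvd L (h i) /\ Xdvd M (v i - w i)) ->
  (forall i, Xdvd M (fb a b i v - fb a b i w)) ->
  Xdvd (L + M) (fbar_lin a b j h v - fbar_lin a b j h w).
Proof.
move=> ja hvw fbvw.
rewrite /fbar_lin; apply: XdvdBB; rewrite -sumrB; apply: Xdvd_sum_nat => kk kk_range.
  rewrite -scalerBr -mulrBr; apply/XdvdZ/XdvdM/fbvw.
  by have [] := hvw kk ltac:(lia).
rewrite -scalerBr -sumrB; apply: XdvdZ; apply: Xdvd_sum_nat => l l_range.
rewrite -scalerBr -!mulrA -mulrBr; apply: XdvdZ; apply: XdvdM.
  by have [] := hvw (kk - l)%N ltac:(lia).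
have [_ vw_l] := hvw l ltac:(lia).
exact: Xdvd_mulB vw_l (fbvw _).
Qed.

End FbarIncrement.

Section PerturbFbar.
Variables (K : fieldType) (a b d j k : nat).
Hypotheses (k_gt0 : (0 < k)%N) (j_le_a : (j <= a)%N).
Variables (P Q : nat -> {poly K}) (E : nat -> K).
Hypothesis XdvdPQ : forall i, (2 <= i <= a)%N -> Xdvd (d * i) (P i) /\ Xdvd (d * i) (Q i).

Let u i := drop_poly (d * i) (P i).
Let w i := drop_poly (d * i) (Q i).
Let h i : {poly K} := E i *: 'X^k.
Let F (ct : nat -> K) := fbar a b j (mvar K a) (fun i => (ct i)%:MP).
Let U (ct : nat -> K) (v : 'I_a.+1) : {poly K} := if (2 <= v)%N then u v else (ct v)%:P.
Let H (v : 'I_a.+1) : {poly K} := if (2 <= v)%N then h v else 0.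

Let fbar_perturb_rescale :
  fbar a b j (fun i => P i + E i *: 'X^(d * i + k)) Q - fbar a b j P Q =
  'X^(d * (b + j)) * (fbar a b j (fun i => u i + h i) w - fbar a b j u w).
Proof.
have eP : fbar a b j (fun i => P i + E i *: 'X^(d * i + k)) Q =
    fbar a b j (fun i => ('X^d) ^+ i * (u i + h i)) (fun i => ('X^d) ^+ i * w i).
  apply: eq_fbar j_le_a _ => i i_range; have [XP XQ] := XdvdPQ i_range.
  by rewrite -exprM mulrDr /u -(Xdvd_dropE XP) /h exprD scalerAr -(Xdvd_dropE XQ).
have eQ : fbar a b j P Q =
    fbar a b j (fun i => ('X^d) ^+ i * u i) (fun i => ('X^d) ^+ i * w i).
  apply: eq_fbar j_le_a _ => i i_range; have [XP XQ] := XdvdPQ i_range.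
  by split; rewrite -exprM ?/u ?/w -Xdvd_dropE.
by rewrite eP eQ !fbar_weighted -mulrBr -exprM.
Qed.

(* Expansion around any base point [ct]; the order estimate takes [ct := 0]. *)
Let fbar_perturb_split ct :
  fbar a b j (fun i => u i + h i) w - fbar a b j u w =
  (mmap (@polyC K) (fun v => U ct v + H v) (F ct) - mmap (@polyC K) (U ct) (F ct))
  + (fbar_lin a b j h w - fbar_lin a b j h (fun i => (ct i)%:P)).
Proof.
have -> : (fun v => U ct v + H v) = fun v : 'I_a.+1 => if (2 <= v)%N then u v + h v else (ct v)%:P.
  by apply: functional_extensionality => v; rewrite /U /H; case: ifP; rewrite ?addr0.
rewrite /F /U (@mmap_fbar_mvar K a b j ct (fun i => u i + h i) j_le_a).
rewrite (@mmap_fbar_mvar K a b j ct u j_le_a).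
exact: fbarD_sub_rebase.
Qed.

Lemma Xdvd_fbar_perturb :
  Xdvd (d * (b + j) + k) (fbar a b j (fun i => P i + E i *: 'X^(d * i + k)) Q - fbar a b j P Q).
Proof.
rewrite fbar_perturb_rescale; apply: XdvdM; first exact: XdvdXn.
rewrite (fbar_perturb_split (fun _ => 0)); apply: XdvdD.
  by apply: Xdvd_mmap_perturb => // v; rewrite /H; case: ifP => _; [apply/XdvdZ/XdvdXn | apply: Xdvd0].
by rewrite -[k]addn0; apply: Xdvd_fbar_linB => // i _; split => //; apply/XdvdZ/XdvdXn.
Qed.

Variable ct : nat -> K.
Hypothesis a_ge2 : (2 <= a)%N.
Hypothesis PQ_lead : forall i, (2 <= i <= a)%N -> (P i)`_(d * i) = ct i /\ (Q i)`_(d * i) = ct i.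

Lemma coef_fbar_perturb :
  (fbar a b j (fun i => P i + E i *: 'X^(d * i + k)) Q - fbar a b j P Q)`_(d * (b + j) + k) =
  \sum_(s < a.-1) jac_entry a b ct j s * E (s + 2)%N.
Proof.
have w_lead i : (2 <= i <= a)%N -> (w i)`_0 = ct i.
  by move=> i_range; rewrite /w coef_drop_poly add0n; have [_ ->] := PQ_lead i_range.
rewrite fbar_perturb_rescale coefXnM ltnNge leq_addr /= addKn (fbar_perturb_split ct) coefD.
have -> : (fbar_lin a b j h w - fbar_lin a b j h (fun i => (ct i)%:P))`_k = 0.
  apply: (Xdvd_fbar_linB (L := k) (M := 1)) => //; last by rewrite addn1.
    move=> i i_range; split; first exact/XdvdZ/XdvdXn.
    by move=> m; rewrite ltnS leqn0 => /eqP ->; rewrite coefB coefC w_lead ?subrr.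
  by move=> i; apply: Xdvd1_fbB => v v_range; rewrite coefC w_lead.
rewrite addr0 coef_mmap_perturb => [|//|v]; last first.
  by rewrite /H; case: ifP => _; [apply/XdvdZ/XdvdXn | apply: Xdvd0].
apply: etrans (sum_ord_from2 (fun v => ((F ct)^`M(v)).@[fun v => ct v]) E a_ge2).
apply: eq_bigr => v _; rewrite coef0_mmap; congr (_ * _).
  apply: meval_eq => v'; rewrite /U; case: ifP => [v'_ge2|_]; last by rewrite coefC.
  have v'_range : (2 <= v' <= a)%N by rewrite v'_ge2 -ltnS ltn_ord.
  by rewrite /u coef_drop_poly add0n; have [->] := PQ_lead v'_range.
by rewrite /H /h; case: ifP => _; rewrite ?coef0 // coefZ coefXn eqxx mulr1.
Qed.

End PerturbFbar.

Lemma Xdvd_prod_perturb (K : comNzRingType) a d k e (l : nat -> nat)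
    (P : nat -> {poly K}) (E : nat -> K) :
  (e <= k)%N -> (forall i, (2 <= i <= a)%N -> Xdvd (d * i) (P i)) ->
  Xdvd (d * \sum_(2 <= p < a.+1) p * l p) (\prod_(2 <= p < a.+1) P p ^+ l p) /\
  Xdvd (d * \sum_(2 <= p < a.+1) p * l p + e)
    (\prod_(2 <= p < a.+1) (P p + E p *: 'X^(d * p + k)) ^+ l p
     - \prod_(2 <= p < a.+1) P p ^+ l p).
Proof.
move=> e_le_k XP; rewrite big_distrr /=.
apply: Xdvd_prodB => p; rewrite mem_index_iota mulnA => p_range.
apply: XdvdXB; first by apply: XP; lia.
by rewrite addrC addKr; apply: XdvdZ; apply: XdvdXn_leq; lia.
Qed.

Lemma Xdvd_oterm_perturb (K : fieldType) a b d j m k (T : oterm K)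
    (P Q : nat -> {poly K}) (E : nat -> K) :
  (0 < k)%N -> oterm_ok a b d j m T ->
  (forall i, (2 <= i <= a)%N -> Xdvd (d * i) (P i) /\ Xdvd (d * i + 1) (P i - Q i)) ->
  Xdvd (d * (b + j) + k + 1)
    (oterm_val a m T (fun i => P i + E i *: 'X^(d * i + k)) Q - oterm_val a m T P Q).
Proof.
move=> k_gt0 T_ok XPQ.
have XP i : (2 <= i <= a)%N -> Xdvd (d * i) (P i) by move/XPQ => [].
rewrite /oterm_val -scalerBr; apply: XdvdZ; move: T_ok; rewrite /oterm_ok.
case: (ot_kind2 T) => /= [[k1_range k2_range weight] | weight]; last first.
  have [_ Xprod] := Xdvd_prod_perturb (ot_l T) E (leqnn k) XP.
  by rewrite !mulr1 -mulrBr; apply: Xdvd_leq (XdvdM (XdvdXn m) Xprod) _; lia.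
have [Xprod Xprod_diff] := Xdvd_prod_perturb (ot_l T) E (leq_pred k) XP.
have Xbump i : (2 <= i <= a)%N ->
    Xdvd (d * i + 1 + k.-1) (P i + E i *: 'X^(d * i + k) - Q i - (P i - Q i)).
  move=> i_range; rewrite (_ : _ - _ = E i *: 'X^(d * i + k)); last by ring.
  by apply: XdvdZ; apply: XdvdXn_leq; lia.
have [_ XPQ1] := XPQ _ k1_range; have [_ XPQ2] := XPQ _ k2_range.
have Xincr := XdvdMB XPQ1 (Xbump _ k1_range) XPQ2 (Xbump _ k2_range).
have Xdiff := XdvdMB Xprod Xprod_diff (XdvdM XPQ1 XPQ2) Xincr.
by rewrite -!mulrA -mulrBr; apply: Xdvd_leq (XdvdM (XdvdXn m) Xdiff) _; lia.
Qed.

(* For a > 2, [condT a b ct] is by definition [\det (jacobianT a b ct) != 0]. *)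
Definition jacobianT (K : fieldType) (a b : nat) (ct : nat -> K) : 'M[K]_(a.-1) :=
  \matrix_(r < a.-1, s < a.-1) jac_entry a b ct r.+1 s.

Section JacobianInvertible.
Variable K : numFieldType.

Lemma mderiv_Xexp n (i : 'I_n) e :
  mderiv i ('X_i ^+ e.+1 : {mpoly K[n]}) = e.+1%:R *: 'X_i ^+ e.
Proof.
elim: e => [|e ih]; first by rewrite expr1 mderivX_id expr0 scale1r.
rewrite exprS mderivM mderivX_id mul1r ih -scalerAr -exprS.
by rewrite -[in RHS]natr1 scalerDl scale1r addrC.
Qed.

Lemma gbin_neq0 a b n : (0 < a)%N -> ~~ (a %| b)%N -> gbin K a b n != 0.
Proof.
move=> a_gt0 a_ndvd_b; rewrite /gbin mulf_neq0 ?invr_eq0 ?pnatr_eq0 -?lt0n ?fact_gt0 //.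
rewrite prodf_seq_neq0; apply/allP => j _ /=; rewrite subr_eq0.
apply: contra a_ndvd_b => /eqP ba; rewrite (_ : b = j * a)%N ?dvdn_mull //.
by apply/eqP; rewrite -(eqr_nat K) natrM -ba mulfVK // pnatr_eq0 -lt0n.
Qed.

(* For a = 2 only the term u^{(b+1)/2} of (1 + u)^{b/2} contributes to x^{b+1}. *)
Lemma fb2_odd (A : comAlgType K) b m (c : nat -> A) : b = m.*2.+1 ->
  fb 2 b (b + 1) c = gbin K 2 b m.+1 *: c 2 ^+ m.+1.
Proof.
move=> b_odd; rewrite /fb big_nat1.
have coef_u n : (((c 2)%:P * 'X^2) ^+ n)`_(b + 1) = c 2 ^+ n * (b + 1 == 2 * n)%N%:R.
  by rewrite exprMn -rmorphXn /= -exprM coefCM coefXn.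
have m_lt : (m.+1 < (b + 1).+1)%N by lia.
rewrite (bigD1 (Ordinal m_lt)) //= big1 ?addr0 => [|[n n_lt] /= n_ne].
  by rewrite coef_u (_ : (b + 1 == 2 * m.+1)%N) ?mulr1 //; apply/eqP; lia.
rewrite coef_u (_ : (b + 1 == 2 * n)%N = false) ?mulr0 ?scaler0 //.
by apply/negbTE/eqP => b_eq; move: n_ne; rewrite -val_eqE /=; apply/negP/negPn/eqP; lia.
Qed.

Lemma det_jacobianT_neq0 a b (ct : nat -> K) :
  (2 <= a)%N -> ~~ (a %| b)%N -> condT a b ct -> \det (jacobianT a b ct) != 0.
Proof.
move=> a_ge2 a_ndvd_b; rewrite /condT; case: eqP => [a_eq2 | _ //]; subst a => ct2_neq0.
have [m b_odd] : exists m, b = m.*2.+1.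
  exists b./2; move: a_ndvd_b; rewrite dvdn2 negbK => b_odd.
  by rewrite -{1}(odd_double_half b) b_odd add1n.
rewrite det_mx11 /jacobianT mxE /jac_entry /fbar big_geq // big_geq // addr0 subr0.
rewrite (fb2_odd _ b_odd) mderivZ /mvar mderiv_Xexp !mevalZ rmorphXn /= mevalXU inordK //.
by rewrite mulf_neq0 ?gbin_neq0 // mulf_neq0 ?expf_neq0 ?pnatr_eq0.
Qed.

End JacobianInvertible.

Definition residual (K : fieldType) (a b d : nat) (ct : nat -> K) (cinf : nat -> ps K)
    (ocnt : nat -> nat -> nat) (oterms : nat -> nat -> nat -> oterm K)
    (j : nat) (c : nat -> ps K) (n : nat) : K :=
  ps_eval (fun cc cc0 => fbar a b j cc cc0) c cinf n
  - (t_mono (d * (b + j)) (fbC a b (b + j) ct) n + oval a ocnt oterms j c cinf n).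

Lemma solves_residualP (K : fieldType) a b d N ct cinf ocnt oterms (c : nat -> ps K) :
  solves a b d N ct cinf ocnt oterms c <->
  forall j, (1 <= j <= a.-1)%N -> forall n, (n < d * (b + j) + N)%N ->
    residual a b d ct cinf ocnt oterms j c n = 0.
Proof.
split=> sol j j_range n n_lt; first by apply/eqP; rewrite subr_eq0; apply/eqP/sol.
by apply/eqP; rewrite -subr_eq0; apply/eqP/sol.
Qed.

Definition perturb (K : fieldType) (d k : nat) (c : nat -> ps K) (E : nat -> K) : nat -> ps K :=
  fun i n => c i n + (if n == (d * i + k)%N then E i else 0).

Lemma perturb_eqmodt (K : fieldType) d k (c : nat -> ps K) E i :
  eqmodt (d * i + k) (perturb d k c E i) (c i).
Proof. by move=> n n_lt; rewrite /perturb (ltn_eqF n_lt) addr0. Qed.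

Lemma ps_trunc_perturb (K : fieldType) d k (c : nat -> ps K) E i N :
  ps_trunc N (perturb d k c E i) =
  ps_trunc N (c i) + (if (d * i + k < N)%N then E i else 0) *: 'X^(d * i + k).
Proof.
apply/polyP => n; rewrite coefD coefZ coefXn !coef_poly /perturb.
by case: eqP => [->|_]; case: ifP => _; rewrite ?mulr1 ?mulr0 ?addr0.
Qed.

Lemma ps_trunc_lead (K : fieldType) N (s : ps K) L x : eqmodt L.+1 s (t_mono L x) ->
  Xdvd L (ps_trunc N s) /\ ((L < N)%N -> (ps_trunc N s)`_L = x).
Proof.
move=> s_lead; split => [n n_lt | L_lt]; rewrite coef_poly.
  case: ifP => // _; rewrite s_lead; last exact: ltnW.
  by rewrite /t_mono (ltn_eqF n_lt).
by rewrite L_lt s_lead // /t_mono eqxx.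
Qed.

Lemma Xdvd_ps_truncB (K : fieldType) N (s s' : ps K) L x :
  eqmodt L.+1 s (t_mono L x) -> eqmodt L.+1 s' (t_mono L x) ->
  Xdvd L.+1 (ps_trunc N s - ps_trunc N s').
Proof.
move=> s_lead s'_lead n n_lt; rewrite coefB !coef_poly.
by case: ifP => _; rewrite ?subrr // s_lead // s'_lead // subrr.
Qed.

Section NewtonStep.
Variables (K : fieldType) (a b d k : nat) (ct : nat -> K) (cinf : nat -> ps K).
Variables (ocnt : nat -> nat -> nat) (oterms : nat -> nat -> nat -> oterm K).
Hypotheses (a_ge2 : (2 <= a)%N) (a_lt_b : (a < b)%N) (k_gt0 : (0 < k)%N).
Hypothesis oterms_okH : oterms_ok a b d ocnt oterms.
Hypothesis cinf_lead :
  forall i, (2 <= i <= a)%N -> eqmodt (d * i).+1 (cinf i) (t_mono (d * i) (ct i)).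
Variables (c : nat -> ps K) (E : nat -> K).
Hypothesis c_lead :
  forall i, (2 <= i <= a)%N -> eqmodt (d * i).+1 (c i) (t_mono (d * i) (ct i)).
Variables (j n : nat).
Hypotheses (j_range : (1 <= j <= a.-1)%N) (n_le : (n <= d * (b + j) + k)%N).

Let P i := ps_trunc n.+1 (c i).
Let Q i := ps_trunc n.+1 (cinf i).
Let E' i := if (d * i + k < n.+1)%N then E i else 0.

Let ps_trunc_perturbE :
  (fun i => ps_trunc n.+1 (perturb d k c E i)) = fun i => P i + E' i *: 'X^(d * i + k).
Proof. by apply: functional_extensionality => i; rewrite ps_trunc_perturb. Qed.

Let XdvdPQ i : (2 <= i <= a)%N -> Xdvd (d * i) (P i) /\ Xdvd (d * i) (Q i).
Proof.
by move=> i_range; split;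
  [exact: (ps_trunc_lead _ (c_lead i_range)).1 | exact: (ps_trunc_lead _ (cinf_lead i_range)).1].
Qed.

Lemma oval_perturb :
  oval a ocnt oterms j (perturb d k c E) cinf n = oval a ocnt oterms j c cinf n.
Proof.
rewrite /oval ps_trunc_perturbE; apply/eqP; rewrite -subr_eq0 -coefB -sumrB; apply/eqP.
apply: (Xdvd_sum (L := d * (b + j) + k + 1)) => [m _|]; last by lia.
rewrite -sumrB; apply: Xdvd_sum => q _.
apply: Xdvd_oterm_perturb k_gt0 (oterms_okH j_range (ltn_ord q)) _ => i i_range.
split; first by have [] := XdvdPQ i_range.
by rewrite addn1; apply: Xdvd_ps_truncB (c_lead i_range) (cinf_lead i_range).
Qed.

Lemma fbar_eval_perturb :
  ps_eval (fun cc cc0 => fbar a b j cc cc0) (perturb d k c E) cinf n =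
  ps_eval (fun cc cc0 => fbar a b j cc cc0) c cinf n
  + (if n == (d * (b + j) + k)%N then \sum_(s < a.-1) jac_entry a b ct j s * E (s + 2)%N else 0).
Proof.
have j_le_a : (j <= a)%N by lia.
rewrite /ps_eval ps_trunc_perturbE -/P -/Q.
rewrite -[X in X = _](subrK (fbar a b j P Q)`_n) -coefB addrC; congr (_ + _).
case: eqP => [n_eq | n_ne]; last by apply: (Xdvd_fbar_perturb k_gt0 j_le_a E' XdvdPQ); lia.
have PQ_lead i : (2 <= i <= a)%N -> (P i)`_(d * i) = ct i /\ (Q i)`_(d * i) = ct i.
  by move=> i_range; split; [apply: (ps_trunc_lead _ (c_lead i_range)).2 |
    apply: (ps_trunc_lead _ (cinf_lead i_range)).2]; nia.
rewrite n_eq (coef_fbar_perturb b k_gt0 j_le_a E' XdvdPQ a_ge2 PQ_lead).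
apply: eq_bigr => s _; rewrite /E' ifT //.
have : (s < a.-1)%N := ltn_ord s; nia.
Qed.

Lemma residual_perturb :
  residual a b d ct cinf ocnt oterms j (perturb d k c E) n =
  residual a b d ct cinf ocnt oterms j c n
  + (if n == (d * (b + j) + k)%N then \sum_(s < a.-1) jac_entry a b ct j s * E (s + 2)%N else 0).
Proof. by rewrite /residual oval_perturb fbar_eval_perturb addrAC. Qed.

End NewtonStep.

Theorem mainTheorem11 (R : rcfType) (a b d k : nat)
  (ct : nat -> R[i]) (cinf : nat -> ps R[i])
  (ocnt : nat -> nat -> nat) (oterms : nat -> nat -> nat -> oterm R[i]) :
  (2 <= a)%N -> (a < b)%N -> ~~ (a %| b)%N -> (0 < d)%N -> (0 < k)%N ->
  condT a b ct ->
  (forall i, (2 <= i <= a)%N -> eqmodt (d * i).+1%N (cinf i) (t_mono (d * i)%N (ct i))) ->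
  oterms_ok a b d ocnt oterms ->
  forall cprev : nat -> ps R[i],
    solves a b d k ct cinf ocnt oterms cprev ->
    (forall i, (2 <= i <= a)%N -> eqmodt (d * i).+1%N (cprev i) (t_mono (d * i)%N (ct i))) ->
    exists cnext : nat -> ps R[i],
      solves a b d k.+1 ct cinf ocnt oterms cnext /\
      (forall i, (2 <= i <= a)%N -> eqmodt (d * i + k)%N (cnext i) (cprev i)).
Proof.
case: a => [|[|a']] a_ge2 //; set a := a'.+2 in a_ge2 *.
(* [a.-1] is now a successor, so [inord] is available on ['I_a.-1]. *)
move=> a_lt_b a_ndvd_b _ k_gt0 condT_ct cinf_lead oterms_okH c /solves_residualP c_res c_lead.
set J := jacobianT a b ct.
have J_unit : J \in unitmx by rewrite unitmxE unitfE det_jacobianT_neq0.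
pose r := \col_(j < a.-1) - residual a b d ct cinf ocnt oterms j.+1 c (d * (b + j.+1) + k).
pose E i := (invmx J *m r) (inord (i - 2)) 0.
exists (perturb d k c E); split => [|i _]; last exact: perturb_eqmodt.
apply/solves_residualP => j j_range n n_lt.
rewrite residual_perturb //; last by lia.
case: eqP => [n_eq | n_ne]; last by rewrite addr0; apply: c_res; lia.
have j_eq : ((inord j.-1 : 'I_a.-1) : nat).+1 = j by rewrite inordK; lia.
have -> : \sum_(s < a.-1) jac_entry a b ct j s * E (s + 2)%N = (J *m (invmx J *m r)) (inord j.-1) 0.
  by rewrite mxE; apply: eq_bigr => s _; rewrite mxE j_eq /E addnK inord_val.
by rewrite mulKVmx // mxE j_eq n_eq addrN.
Qed.
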